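(* For an integer $n>1$ define, for every integer $1\le r\le n-1$, $$E^{C}_{n}(r)=\frac{r}{n}\sum_{k=r+1}^{n}\frac{1-\frac{k}{n}}{k-1},$$ and let $\mathcal{M}(n)$ be a value of $r$ at which $E^C_n$ attains its maximum. Let $\rho=-\frac12 W(-2e^{-2})=0.20318\dots$. Then (i) $\lim_{n\to\infty}\mathcal{M}(n)/n=\rho$; (ii) $\lim_{n\to\infty}E^C_n(\mathcal{M}(n))=\lim_{n\to\infty}E^C_n(\lfloor\rho n\rfloor)=\rho(1-\rho)=0.16190\dots$.
   Context: $W$ denotes the principal (main) branch of the Lambert $W$ function, i.e. the inverse of $z\mapsto ze^z$ on $[-1,\infty)$, so that $z=W(ze^z)$ for $z\ge -1$. *)

From Stdlib Require Import Reals Lra Lia List ClassicalEpsilon.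
From Coquelicot Require Import Coquelicot.
Import ListNotations.
Open Scope R_scope.

(* Principal branch of Lambert W: for x >= -1/e, the unique z >= -1 with
   z * exp z = x (chosen by Hilbert's epsilon; outside the domain the
   value is irrelevant/unspecified). *)
Definition LambertW (x : R) : R :=
  epsilon (inhabits 0%R) (fun z => -1 <= z /\ z * exp z = x).

Definition EC (n r : nat) : R :=
  (INR r / INR n) *
  fold_right Rplus 0
    (map (fun k : nat => (1 - INR k / INR n) / (INR k - 1)) (seq (r + 1) (n - r))).

Definition rho : R := - (1/2) * LambertW (-2 * exp (-2)).

Definition nat_floor (x : R) : nat := Z.to_nat (Int_part x).

From Stdlib Require Import Reals Lra Lia List ClassicalEpsilon ZArith.
From Coquelicot Require Import Coquelicot.
Open Scope R_scope.

(* Write x = r/n.  Comparing the harmonic sum in E^C_n(r) with ln(n/r) gives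
   |E^C_n(r) - x (x - 1 - ln x)| <= 1/n uniformly in 1 <= r <= n.  The profile
   x (x - 1 - ln x) has derivative 2x - 2 - ln x, which is convex with minimum
   at 1/2 and vanishes at 1 and at rho (W(-2e^{-2}) = -2 rho means exactly
   ln rho = 2 rho - 2).  So on (0,1] the profile increases up to rho and then
   decreases, with maximum rho (1 - rho).  Hence E^C_n(floor(rho n)) and
   E^C_n(M(n)) both tend to rho (1 - rho), and since the maximum is strict,
   M(n)/n tends to rho. *)

Lemma ln_le_sub1 u : 0 < u -> ln u <= u - 1.
Proof.
  intros Hu. pose proof (exp_ineq1_le (ln u)) as H. rewrite exp_ln in H; lra.
Qed.

Lemma ln_lt_sub1 u : 0 < u -> u <> 1 -> ln u < u - 1.
Proof.
  intros Hu Hu1.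
  assert (Hln : ln u <> 0).
  { intro E. apply Hu1. rewrite <- (exp_ln u Hu), E. apply exp_0. }
  pose proof (exp_ineq1 _ Hln) as H. rewrite exp_ln in H; lra.
Qed.

Lemma ln_diff_bounds x y : 0 < x < y -> (y - x) / y < ln y - ln x < (y - x) / x.
Proof.
  intros Hxy.
  assert (Hxy1 : x / y * y = x) by (field; lra).
  assert (Hyx1 : y / x * x = y) by (field; lra).
  pose proof (ln_lt_sub1 (x / y) ltac:(apply Rdiv_lt_0_compat; lra) ltac:(nra)) as Hl.
  pose proof (ln_lt_sub1 (y / x) ltac:(apply Rdiv_lt_0_compat; lra) ltac:(nra)) as Hu.
  rewrite ln_div in Hl, Hu by lra.
  replace (x / y - 1) with (- ((y - x) / y)) in Hl by (field; lra).
  replace (y / x - 1) with ((y - x) / x) in Hu by (field; lra).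
  lra.
Qed.

Lemma LambertW_spec x : - exp (-1) <= x <= 0 ->
  -1 <= LambertW x /\ LambertW x * exp (LambertW x) = x.
Proof.
  intros Hx. unfold LambertW. apply epsilon_spec.
  assert (Hc : continuity (fun z => z * exp z - x)).
  { apply continuity_minus; [|apply continuity_const; now intros ? ?].
    apply continuity_mult; [apply derivable_continuous, derivable_id|].
    apply derivable_continuous, derivable_exp. }
  destruct (IVT_cor _ (-1) 0 Hc) as [z [Hz Hzx]].
  - lra.
  - rewrite exp_0. nra.
  - exists z. split; lra.
Qed.

Lemma rho_spec : -1 <= -2 * rho /\ -2 * rho * exp (-2 * rho) = -2 * exp (-2).
Proof.
  assert (Hrho : -2 * rho = LambertW (-2 * exp (-2))) by (unfold rho; field).
  rewrite Hrho. apply LambertW_spec.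
  assert (Hexp1 : exp (-1) = exp 1 * exp (-2)) by (rewrite <- exp_plus; f_equal; lra).
  pose proof (exp_ineq1 1 ltac:(lra)). pose proof (exp_pos (-2)). nra.
Qed.

Lemma rho_bounds : 0 < rho <= 1/2.
Proof.
  destruct rho_spec as [Hle Heq].
  pose proof (exp_pos (-2)). pose proof (exp_pos (-2 * rho)). nra.
Qed.

Lemma rho_range : 0 < rho < 1.
Proof. pose proof rho_bounds. lra. Qed.

Lemma ln_rho : ln rho = 2 * rho - 2.
Proof.
  destruct rho_spec as [_ Heq]. pose proof rho_bounds.
  assert (E : rho = exp (2 * rho - 2)).
  { assert (Hsplit : exp (-2) = exp (2 * rho - 2) * exp (-2 * rho))
      by (rewrite <- exp_plus; f_equal; ring).
    rewrite Hsplit in Heq. pose proof (exp_pos (-2 * rho)). nra. }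
  rewrite E at 1. apply ln_exp.
Qed.

Definition EC_profile (x : R) : R := x * (x - 1 - ln x).

Definition EC_slope (x : R) : R := 2 * x - 2 - ln x.

Lemma EC_profile_derive x : 0 < x -> derivable_pt_lim EC_profile x (EC_slope x).
Proof.
  intros Hx. apply is_derive_Reals. unfold EC_profile, EC_slope.
  auto_derive; [lra | field; lra].
Qed.

Lemma EC_profile_continuous x : 0 < x -> continuity_pt EC_profile x.
Proof.
  intros Hx. apply derivable_continuous_pt. exists (EC_slope x). now apply EC_profile_derive.
Qed.

Lemma EC_slope_decreasing x y : 0 < x < y -> y <= 1/2 -> EC_slope y < EC_slope x.
Proof.
  intros Hxy Hy. pose proof (ln_diff_bounds x y Hxy) as [Hl _].
  assert (2 * (y - x) <= (y - x) / y).
  { apply Rmult_le_reg_r with y; [lra|]. field_simplify; nra. }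
  unfold EC_slope. lra.
Qed.

Lemma EC_slope_increasing x y : 1/2 <= x < y -> EC_slope x < EC_slope y.
Proof.
  intros Hxy. pose proof (ln_diff_bounds x y ltac:(lra)) as [_ Hu].
  assert ((y - x) / x <= 2 * (y - x)).
  { apply Rmult_le_reg_r with x; [lra|]. field_simplify; nra. }
  unfold EC_slope. lra.
Qed.

Lemma EC_slope_rho : EC_slope rho = 0.
Proof. unfold EC_slope. rewrite ln_rho. ring. Qed.

Lemma EC_slope_1 : EC_slope 1 = 0.
Proof. unfold EC_slope. rewrite ln_1. ring. Qed.

Lemma EC_profile_rho : EC_profile rho = rho * (1 - rho).
Proof. unfold EC_profile. rewrite ln_rho. ring. Qed.

Lemma EC_profile_increasing x y : 0 < x < y -> y <= rho -> EC_profile x < EC_profile y.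
Proof.
  intros Hxy Hy. pose proof rho_bounds.
  destruct (MVT_cor2 EC_profile EC_slope x y) as [c [Hc Hcxy]]; [lra| |].
  { intros c Hc. apply EC_profile_derive. lra. }
  assert (0 < EC_slope c).
  { rewrite <- EC_slope_rho. apply EC_slope_decreasing; lra. }
  nra.
Qed.

Lemma EC_profile_decreasing x y : rho <= x < y -> y <= 1 -> EC_profile y < EC_profile x.
Proof.
  intros Hxy Hy. pose proof rho_bounds.
  destruct (MVT_cor2 EC_profile EC_slope x y) as [c [Hc Hcxy]]; [lra| |].
  { intros c Hc. apply EC_profile_derive. lra. }
  assert (EC_slope c < 0).
  { destruct (Rle_or_lt c (1/2)).
    - rewrite <- EC_slope_rho. apply EC_slope_decreasing; lra.
    - rewrite <- EC_slope_1. apply EC_slope_increasing; lra. }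
  nra.
Qed.

Section StrictMaximum.

Variables (g : R -> R) (a : R).
Hypothesis a_range : 0 < a < 1.
Hypothesis g_increasing : forall x y, 0 < x < y -> y <= a -> g x < g y.
Hypothesis g_decreasing : forall x y, a <= x < y -> y <= 1 -> g y < g x.

Lemma strict_max_le x : 0 < x <= 1 -> g x <= g a.
Proof.
  intros Hx. destruct (Rtotal_order x a) as [H | [-> | H]].
  - left. apply g_increasing; lra.
  - lra.
  - left. apply g_decreasing; lra.
Qed.

Lemma strict_max_separated eps : 0 < eps ->
  exists d, 0 < d /\ forall x, 0 < x <= 1 -> g a - d < g x -> Rabs (x - a) < eps.
Proof.
  intros Heps.
  set (e := Rmin eps (Rmin (a / 2) ((1 - a) / 2))).
  assert (He : 0 < e /\ e <= eps /\ e < a /\ a + e < 1).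
  { assert (0 < e) by (repeat apply Rmin_glb_lt; lra).
    unfold e in *. pose proof (Rmin_l eps (Rmin (a / 2) ((1 - a) / 2))).
    pose proof (Rmin_r eps (Rmin (a / 2) ((1 - a) / 2))).
    pose proof (Rmin_l (a / 2) ((1 - a) / 2)). pose proof (Rmin_r (a / 2) ((1 - a) / 2)).
    lra. }
  exists (g a - Rmax (g (a - e)) (g (a + e))). split.
  - apply Rlt_0_minus, Rmax_lub_lt; [apply g_increasing | apply g_decreasing]; lra.
  - intros x Hx Hgx.
    destruct (Rlt_or_le (Rabs (x - a)) e) as [Hnear | Hfar]; [lra | exfalso].
    assert (Hout : g x <= Rmax (g (a - e)) (g (a + e))).
    { destruct (Rle_or_lt x a).
      - rewrite Rabs_left1 in Hfar by lra.
        eapply Rle_trans, Rmax_l.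
        destruct (Req_dec x (a - e)) as [-> | Hne]; [lra|].
        left. apply g_increasing; lra.
      - rewrite Rabs_pos_eq in Hfar by lra.
        eapply Rle_trans, Rmax_r.
        destruct (Req_dec x (a + e)) as [-> | Hne]; [lra|].
        left. apply g_decreasing; lra. }
    lra.
Qed.

Lemma strict_max_cvg (u : nat -> R) :
  eventually (fun n => 0 < u n <= 1) ->
  is_lim_seq (fun n => g (u n)) (g a) -> is_lim_seq u a.
Proof.
  intros Hrange Hlim. apply is_lim_seq_spec. intros eps.
  destruct (strict_max_separated eps (cond_pos eps)) as [d [Hd Hsep]].
  apply is_lim_seq_spec in Hlim.
  apply (filter_imp (fun n => (0 < u n <= 1) /\ Rabs (g (u n) - g a) < d)).
  - intros n [Hu Hgu]. apply Hsep; [exact Hu|].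
    apply Rabs_lt_between' in Hgu. lra.
  - apply filter_and; [exact Hrange | exact (Hlim (mkposreal d Hd))].
Qed.

End StrictMaximum.

(* [harmonic_sum j m] is [1/j + ... + 1/(j+m-1)], indexed as in [EC]. *)
Definition harmonic_sum (j m : nat) : R :=
  fold_right Rplus 0 (map (fun k : nat => 1 / (INR k - 1)) (seq (j + 1) m)).

Lemma harmonic_sum_S j m : (1 <= j)%nat ->
  harmonic_sum j (S m) = / INR j + harmonic_sum (S j) m.
Proof.
  intros Hj. unfold harmonic_sum. simpl.
  replace (S (j + 1)) with (S j + 1)%nat by lia.
  f_equal. rewrite plus_INR. simpl. replace (INR j + 1 - 1) with (INR j) by ring.
  field. apply not_0_INR. lia.
Qed.

Lemma harmonic_sum_ln_bounds m : forall j, (1 <= j)%nat ->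
  ln (INR (j + m)) - ln (INR j) <= harmonic_sum j m
  <= / INR j + ln (INR (j + m)) - ln (INR j).
Proof.
  induction m as [|m IHm]; intros j Hj.
  - unfold harmonic_sum. simpl. rewrite Nat.add_0_r.
    assert (0 < / INR j) by (apply Rinv_0_lt_compat, lt_0_INR; lia). lra.
  - rewrite harmonic_sum_S by exact Hj.
    specialize (IHm (S j) ltac:(lia)).
    replace (S j + m)%nat with (j + S m)%nat in IHm by lia.
    assert (Hj1 : 1 <= INR j) by (apply (le_INR 1); lia).
    pose proof (ln_diff_bounds (INR j) (INR (S j))) as Hstep.
    specialize (Hstep ltac:(split; [lra | apply lt_INR; lia])).
    replace (INR (S j) - INR j) with 1 in Hstep by (rewrite S_INR; ring).
    unfold Rdiv in Hstep. rewrite !Rmult_1_l in Hstep.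
    assert (0 < / INR (S j)) by (apply Rinv_0_lt_compat, lt_0_INR; lia).
    lra.
Qed.

Lemma sum_map_affine (c b : R) (u : nat -> R) (l : list nat) :
  fold_right Rplus 0 (map (fun k => c * u k - b) l) =
  c * fold_right Rplus 0 (map u l) - b * INR (length l).
Proof.
  induction l as [|k l IHl]; simpl; [ring|].
  rewrite IHl. destruct (length l); [simpl; ring | rewrite S_INR; ring].
Qed.

Lemma EC_harmonic n r : (1 <= r <= n)%nat ->
  EC n r = INR r / INR n *
    ((INR n - 1) / INR n * harmonic_sum r (n - r) - (INR n - INR r) / INR n).
Proof.
  intros Hr. unfold EC, harmonic_sum.
  assert (Hn : 0 < INR n) by (apply lt_0_INR; lia).
  rewrite (map_ext_in _ (fun k => (INR n - 1) / INR n * (1 / (INR k - 1)) - / INR n)).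
  - rewrite sum_map_affine, length_seq, minus_INR by lia. f_equal. field. lra.
  - intros k Hk. apply in_seq in Hk.
    assert (2 <= INR k) by (apply (le_INR 2); lia).
    field. lra.
Qed.

Lemma neg_mul_ln_bounds x : 0 < x <= 1 -> 0 <= - (x * ln x) <= 1 - x.
Proof.
  intros Hx.
  assert (Hneg : ln x <= 0) by (rewrite <- ln_1; apply ln_le; lra).
  pose proof (ln_le_sub1 (/ x) ltac:(apply Rinv_0_lt_compat; lra)) as Hinv.
  rewrite ln_Rinv in Hinv by lra.
  assert (x * / x = 1) by (field; lra).
  nra.
Qed.

Lemma nat_ratio_range m n : (1 <= m <= n)%nat -> 0 < INR m / INR n <= 1.
Proof.
  intros Hmn.
  assert (1 <= INR m) by (apply (le_INR 1); lia).
  assert (INR m <= INR n) by (apply le_INR; lia).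
  split; [apply Rdiv_lt_0_compat; lra|].
  apply Rmult_le_reg_r with (INR n); [lra|]. field_simplify; lra.
Qed.

Lemma EC_profile_approx n r : (1 <= r <= n)%nat ->
  Rabs (EC n r - EC_profile (INR r / INR n)) <= / INR n.
Proof.
  intros Hr. rewrite EC_harmonic by exact Hr.
  assert (Hn : 0 < INR n) by (apply lt_0_INR; lia).
  assert (Hr1 : 1 <= INR r) by (apply (le_INR 1); lia).
  assert (Hrn : INR r <= INR n) by (apply le_INR; lia).
  pose proof (harmonic_sum_ln_bounds (n - r) r ltac:(lia)) as Hharm.
  replace (r + (n - r))%nat with n in Hharm by lia.
  set (S := harmonic_sum r (n - r)) in *.
  set (x := INR r / INR n).
  assert (Hx : 0 < x <= 1) by exact (nat_ratio_range r n Hr).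
  set (D := ln (INR n) - ln (INR r)).
  assert (HD : ln x = - D) by (unfold x, D; rewrite ln_div by lra; ring).
  assert (E : x * ((INR n - 1) / INR n * S - (INR n - INR r) / INR n) - EC_profile x
              = (INR n - 1) / INR n * (x * (S - D)) - x * D / INR n).
  { unfold EC_profile. rewrite HD. unfold x. field. lra. }
  rewrite E. apply Rabs_le_between.
  assert (Hgap : 0 <= x * (S - D) <= / INR n).
  { assert (x * / INR r = / INR n) by (unfold x; field; lra).
    assert (0 < / INR r) by (apply Rinv_0_lt_compat; lra).
    unfold D. nra. }
  assert (HxD : 0 <= x * D / INR n <= / INR n).
  { pose proof (neg_mul_ln_bounds x Hx) as Hb. rewrite HD in Hb.
    assert (x * D / INR n = x * D * / INR n) by (unfold Rdiv; ring).
    assert (0 < / INR n) by (apply Rinv_0_lt_compat; lra).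
    nra. }
  assert (Hq : 0 <= (INR n - 1) / INR n <= 1).
  { split; [apply Rdiv_le_0_compat; lra|].
    apply Rmult_le_reg_r with (INR n); [lra|]. field_simplify; lra. }
  nra.
Qed.

Lemma is_lim_seq_inv_INR : is_lim_seq (fun n => / INR n) 0.
Proof. exact (is_lim_seq_inv INR p_infty is_lim_seq_INR ltac:(discriminate)). Qed.

Lemma is_lim_seq_approx (u v : nat -> R) (l : R) :
  eventually (fun n => Rabs (u n - v n) <= / INR n) ->
  is_lim_seq v l -> is_lim_seq u l.
Proof.
  intros Hclose Hv.
  apply is_lim_seq_le_le_loc with (fun n => v n - / INR n) (fun n => v n + / INR n).
  - revert Hclose. apply filter_imp. intros n. apply Rabs_le_between'.
  - pose proof (is_lim_seq_minus' _ _ _ _ Hv is_lim_seq_inv_INR) as H.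
    rewrite Rminus_0_r in H. exact H.
  - pose proof (is_lim_seq_plus' _ _ _ _ Hv is_lim_seq_inv_INR) as H.
    rewrite Rplus_0_r in H. exact H.
Qed.

Lemma nat_floor_spec x : 0 <= x -> INR (nat_floor x) <= x < INR (nat_floor x) + 1.
Proof.
  intros Hx. unfold nat_floor. destruct (base_Int_part x) as [H1 H2].
  assert (0 <= Int_part x)%Z.
  { assert (-1 < IZR (Int_part x)) by lra. apply lt_IZR in H. lia. }
  rewrite INR_IZR_INZ, Z2Nat.id by assumption. lra.
Qed.

Lemma is_lim_seq_nat_floor_ratio a : 0 <= a ->
  is_lim_seq (fun n => INR (nat_floor (a * INR n)) / INR n) a.
Proof.
  intros Ha. apply is_lim_seq_approx with (fun _ => a); [|apply is_lim_seq_const].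
  exists 1%nat. intros n Hn.
  assert (1 <= INR n) by (apply (le_INR 1); lia).
  destruct (nat_floor_spec (a * INR n) ltac:(nra)) as [Hlo Hhi].
  replace (INR (nat_floor (a * INR n)) / INR n - a)
    with ((INR (nat_floor (a * INR n)) - a * INR n) * / INR n) by (field; lra).
  assert (0 < / INR n) by (apply Rinv_0_lt_compat; lra).
  apply Rabs_le_between. split; nra.
Qed.

Lemma nat_floor_range a : 0 < a < 1 ->
  eventually (fun n => (1 <= nat_floor (a * INR n) <= n - 1)%nat).
Proof.
  intros Ha. destruct (archimed_cor1 a (proj1 Ha)) as [N [HN HN0]].
  exists N. intros n Hn.
  assert (HNn : INR N <= INR n) by (apply le_INR; exact Hn).
  assert (HNpos : 0 < INR N) by (apply lt_0_INR; exact HN0).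
  assert (HN1 : 1 < a * INR N).
  { apply Rmult_lt_compat_r with (r := INR N) in HN; [|assumption].
    rewrite Rinv_l in HN by lra. exact HN. }
  destruct (nat_floor_spec (a * INR n) ltac:(nra)) as [Hlo Hhi].
  assert (Hpos : INR 0 < INR (nat_floor (a * INR n))) by (simpl; nra).
  assert (Hlt : INR (nat_floor (a * INR n)) < INR n) by nra.
  apply INR_lt in Hpos, Hlt. lia.
Qed.

Lemma is_lim_seq_EC (r : nat -> nat) (x : R) : 0 < x ->
  eventually (fun n => (1 <= r n <= n)%nat) ->
  is_lim_seq (fun n => INR (r n) / INR n) x ->
  is_lim_seq (fun n => EC n (r n)) (EC_profile x).
Proof.
  intros Hx Hr Hratio.
  apply is_lim_seq_approx with (fun n => EC_profile (INR (r n) / INR n)).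
  - revert Hr. apply filter_imp. intros n. apply EC_profile_approx.
  - apply is_lim_seq_continuous; [apply EC_profile_continuous|]; assumption.
Qed.

Lemma EC_profile_le_rho x : 0 < x <= 1 -> EC_profile x <= rho * (1 - rho).
Proof.
  rewrite <- EC_profile_rho.
  exact (strict_max_le EC_profile rho EC_profile_increasing EC_profile_decreasing x).
Qed.

Lemma EC_floor_rho_lim :
  is_lim_seq (fun n => EC n (nat_floor (rho * INR n))) (rho * (1 - rho)).
Proof.
  rewrite <- EC_profile_rho. apply is_lim_seq_EC; [apply rho_range | |].
  - generalize (nat_floor_range rho rho_range). apply filter_imp. intros n Hn. lia.
  - apply is_lim_seq_nat_floor_ratio. left; apply rho_range.
Qed.

Definition EC_argmax (M : nat -> nat) : Prop :=
  forall n : nat, (1 < n)%nat ->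
    (1 <= M n <= n - 1)%nat /\
    (forall r : nat, (1 <= r <= n - 1)%nat -> EC n r <= EC n (M n)).

Lemma EC_argmax_value_lim M : EC_argmax M ->
  is_lim_seq (fun n => EC n (M n)) (rho * (1 - rho)).
Proof.
  intros HM.
  apply is_lim_seq_le_le_loc
    with (fun n => EC n (nat_floor (rho * INR n))) (fun n => rho * (1 - rho) + / INR n).
  - apply (filter_imp (fun n => (1 < n)%nat /\ (1 <= nat_floor (rho * INR n) <= n - 1)%nat)).
    + intros n [Hn Hfl]. destruct (HM n Hn) as [HMn Hmax].
      split; [exact (Hmax _ Hfl)|].
      pose proof (EC_profile_approx n (M n) ltac:(lia)) as Happrox.
      apply Rabs_le_between' in Happrox.
      pose proof (EC_profile_le_rho _ (nat_ratio_range (M n) n ltac:(lia))).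
      lra.
    + apply filter_and; [exists 2%nat; intros; lia | exact (nat_floor_range rho rho_range)].
  - exact EC_floor_rho_lim.
  - pose proof (is_lim_seq_plus' _ _ _ 0 (is_lim_seq_const (rho * (1 - rho))) is_lim_seq_inv_INR) as H.
    rewrite Rplus_0_r in H. exact H.
Qed.

Lemma EC_argmax_ratio_lim M : EC_argmax M ->
  is_lim_seq (fun n => INR (M n) / INR n) rho.
Proof.
  intros HM.
  apply (strict_max_cvg EC_profile rho rho_range EC_profile_increasing EC_profile_decreasing).
  - exists 2%nat. intros n Hn. apply nat_ratio_range. pose proof (proj1 (HM n Hn)). lia.
  - rewrite EC_profile_rho.
    apply is_lim_seq_approx with (fun n => EC n (M n)); [|exact (EC_argmax_value_lim M HM)].
    exists 2%nat. intros n Hn. rewrite Rabs_minus_sym.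
    apply EC_profile_approx. pose proof (proj1 (HM n Hn)). lia.
Qed.

Theorem proposition3 :
  forall M : nat -> nat,
    (forall n : nat, (1 < n)%nat ->
       (1 <= M n <= n - 1)%nat /\
       (forall r : nat, (1 <= r <= n - 1)%nat -> EC n r <= EC n (M n))) ->
    is_lim_seq (fun n => INR (M n) / INR n) rho /\
    is_lim_seq (fun n => EC n (M n)) (rho * (1 - rho)) /\
    is_lim_seq (fun n => EC n (nat_floor (rho * INR n))) (rho * (1 - rho)).
Proof.
  intros M HM.
  split; [|split].
  - exact (EC_argmax_ratio_lim M HM).
  - exact (EC_argmax_value_lim M HM).
  - exact EC_floor_rho_lim.
Qed.
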